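(* Let $i\ne j$ be agents and $\chi_i(0),\chi_j(0)>0$ with $\chi_i(0)+\chi_j(0)\le1$ such that $$\lim_{N\to\infty}\frac{\sum_{k=\chi_i(0)N}^\infty 1/F_i(k)}{\sum_{k=\chi_j(0)N}^\infty 1/F_j(k)}=1. \qquad (\ast)$$ (1) If there is $C<\infty$ with $\frac1kF_i(k)\sum_{l=k}^\infty\frac1{F_i(l)}\le C$ for all $k\in\mathbb{N}$, then for every $\epsilon>0$ $$\limsup_{N\to\infty}\frac{\sum_{k=(\chi_i(0)+\epsilon)N}^\infty 1/F_i(k)}{\sum_{k=\chi_j(0)N}^\infty 1/F_j(k)}<1 .$$ (2) If $\lim_{k\to\infty}\frac1kF_i(k)\sum_{l=k}^\infty\frac1{F_i(l)}=\infty$ and $(\ast)$ holds for one choice of $\chi_i(0),\chi_j(0)$, then $(\ast)$ holds for all choices $\chi_i(0),\chi_j(0)>0$ with $\chi_i(0)+\chi_j(0)\le1$.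
   Context: Feedback functions $F_i,F_j:\mathbb{N}\to(0,\infty)$ with $\sum_k 1/F_i(k)<\infty$ and $\sum_k1/F_j(k)<\infty$. Sums whose lower limit $xN$ is non-integer start at the rounded value. *)

From Stdlib Require Import Reals ZArith.
From Coquelicot Require Import Coquelicot.
Open Scope R_scope.

(* Rounding to the nearest natural number: floor (x + 1/2), clipped at 0. *)
Definition round_nat (x : R) : nat := Z.to_nat (up (x + / 2) - 1)%Z.

Definition tail (F : nat -> R) (m : nat) : R :=
  Series (fun n => / F (m + n)%nat).

Definition tailR (F : nat -> R) (x : R) : R := tail F (round_nat x).

Definition feedback (F : nat -> R) : Prop :=
  (forall k, 0 < F k) /\ ex_series (fun k => / F k).

Definition ratio_cond (Fi Fj : nat -> R) (a b : R) : Prop :=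
  is_lim_seq (fun N => tailR Fi (a * INR N) / tailR Fj (b * INR N)) 1.

(* Write T(m) for the tail sum of 1/F from m, so that T(k) - T(k+1) = 1/F(k).
   If eventually T(k) >= A k / F(k) for every A, then between m and M <= K m the
   tail loses at most a fraction K/A of its value, so T is slowly varying:
   T(yN) / T(xN) -> 1 for fixed x, y > 0.  Part (2) follows, since passing from
   (chi_i, chi_j) to (a, b) only rescales N and the lower limits by bounded factors;
   for the tail of F_j this invariance is inherited from (star) itself.
   If instead T(k) <= C k / F(k), every term 1/F(k) with m <= k < M is at least
   T(M) / (C M), so T(M) / T(m) <= C / (C + (M - m) / M); for m = chi_i N and
   M = (chi_i + eps) N this stays below 1, which gives part (1). *)

From Stdlib Require Import Reals Lra Lia ZArith.
From Coquelicot Require Import Coquelicot.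
Open Scope R_scope.

Lemma round_nat_bounds x : 0 <= x -> x - / 2 < INR (round_nat x) <= x + / 2.
Proof.
  intros Hx. unfold round_nat. destruct (archimed (x + / 2)) as [Hup1 Hup2].
  assert (Hu : (0 < up (x + / 2))%Z) by (apply lt_IZR; simpl; lra).
  rewrite INR_IZR_INZ, Z2Nat.id, minus_IZR by lia. simpl. lra.
Qed.

Lemma round_nat_le x y : x <= y -> (round_nat x <= round_nat y)%nat.
Proof.
  intros Hxy. unfold round_nat.
  destruct (archimed (x + / 2)) as [Hx1 Hx2]. destruct (archimed (y + / 2)) as [Hy1 Hy2].
  enough (up (x + / 2) <= up (y + / 2))%Z by lia.
  apply Z.lt_pred_le, lt_IZR. rewrite <- Z.sub_1_r, minus_IZR. simpl. lra.
Qed.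

Lemma round_nat_between a b x : 1 <= a -> a <= x <= b -> a / 2 <= INR (round_nat x) <= b + a / 2.
Proof. intros Ha Hx. destruct (round_nat_bounds x) as [H1 H2]; lra. Qed.

Lemma eventually_lt_linear a y : 0 < a -> eventually (fun N => y < a * INR N).
Proof.
  intros Ha. assert (HINR := is_lim_seq_INR). apply is_lim_seq_spec in HINR.
  apply (filter_imp (fun N => y / a < INR N)); [|apply HINR].
  intros N HN. apply (Rmult_lt_compat_l a) in HN; [|easy].
  replace (a * (y / a)) with y in HN by (field; lra). exact HN.
Qed.

Lemma filterlim_linear_lower (psi : nat -> nat) a : 0 < a ->
  eventually (fun N => a * INR N <= INR (psi N)) -> filterlim psi eventually eventually.
Proof.
  intros Ha Hpsi P [M HM]. unfold filtermap.
  apply (filter_imp (fun N => a * INR N <= INR (psi N) /\ INR M < a * INR N)).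
  - intros N [H1 H2]. apply HM, INR_le. lra.
  - apply filter_and; [exact Hpsi | now apply eventually_lt_linear].
Qed.

Section Tail.

Variable F : nat -> R.
Hypothesis HF : feedback F.

Lemma Finv_pos k : 0 < / F k.
Proof. apply Rinv_0_lt_compat, HF. Qed.

Lemma ex_series_tail m : ex_series (fun n => / F (m + n)%nat).
Proof. now apply (ex_series_incr_n (fun k => / F k) m), HF. Qed.

Lemma tail_S m : tail F m = / F m + tail F (S m).
Proof.
  unfold tail. rewrite Series_incr_1 by apply ex_series_tail.
  rewrite Nat.add_0_r. f_equal. apply Series_ext. intros n. now rewrite Nat.add_succ_r.
Qed.

Lemma tail_pos m : 0 < tail F m.
Proof.
  assert (H0 : 0 <= tail F (S m)).
  { unfold tail.
    assert (H := Series_le (fun n => 0 * / F (S m + n)%nat) (fun n => / F (S m + n)%nat)).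
    rewrite Series_scal_l, Rmult_0_l in H. apply H; [|apply ex_series_tail].
    intros n. rewrite Rmult_0_l. split; [lra|]. left. apply Finv_pos. }
  rewrite tail_S. generalize (Finv_pos m). lra.
Qed.

Lemma tail_le m n : (m <= n)%nat -> tail F n <= tail F m.
Proof.
  induction 1 as [|n _ IH]; [lra|].
  rewrite (tail_S n) in IH. generalize (Finv_pos n). lra.
Qed.

Lemma tail_drop_ge lo m n : (forall k, (m <= k < m + n)%nat -> lo <= / F k) ->
  INR n * lo <= tail F m - tail F (m + n).
Proof.
  induction n as [|n IH]; intros Hlo.
  - rewrite Nat.add_0_r. simpl. lra.
  - rewrite Nat.add_succ_r, S_INR.
    assert (IH' := IH (fun k Hk => Hlo k ltac:(lia))).
    rewrite (tail_S (m + n)) in IH'. generalize (Hlo (m + n)%nat ltac:(lia)). lra.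
Qed.

Lemma tail_drop_le hi m n : (forall k, (m <= k < m + n)%nat -> / F k <= hi) ->
  tail F m - tail F (m + n) <= INR n * hi.
Proof.
  induction n as [|n IH]; intros Hhi.
  - rewrite Nat.add_0_r. simpl. lra.
  - rewrite Nat.add_succ_r, S_INR.
    assert (IH' := IH (fun k Hk => Hhi k ltac:(lia))).
    rewrite (tail_S (m + n)) in IH'. generalize (Hhi (m + n)%nat ltac:(lia)). lra.
Qed.

Lemma tail_ratio_ge A m M : 0 < A -> (1 <= m <= M)%nat ->
  (forall k, (m <= k)%nat -> A * INR k / F k <= tail F k) ->
  1 - (INR M - INR m) / (A * INR m) <= tail F M / tail F m.
Proof.
  intros HA Hm Hgrowth.
  assert (Hm0 : 0 < INR m) by (apply lt_0_INR; lia).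
  assert (HAm : 0 < A * INR m) by nra.
  assert (Hdrop := tail_drop_le (tail F m / (A * INR m)) m (M - m)).
  replace (m + (M - m))%nat with M in Hdrop by lia.
  rewrite minus_INR in Hdrop by lia.
  assert (Tm := tail_pos m).
  enough (E : tail F m - tail F M <= (INR M - INR m) / (A * INR m) * tail F m).
  { apply (Rmult_le_reg_r (tail F m)); [lra|].
    unfold Rdiv at 2. rewrite Rmult_assoc, Rinv_l, Rmult_1_r by lra. lra. }
  replace ((INR M - INR m) / (A * INR m) * tail F m)
    with ((INR M - INR m) * (tail F m / (A * INR m))) by (field; lra).
  apply Hdrop. intros k Hk.
  (* [A m / F k <= A k / F k <= tail F k <= tail F m] *)
  assert (Hgk := Hgrowth k ltac:(lia)).
  assert (Hmk : INR m <= INR k) by (apply le_INR; lia).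
  assert (Hfk := Finv_pos k). assert (Htk := tail_le m k ltac:(lia)).
  apply (Rmult_le_reg_l (A * INR m)); [lra|].
  replace (A * INR m * (tail F m / (A * INR m))) with (tail F m) by (field; lra).
  unfold Rdiv in Hgk. nra.
Qed.

Lemma tail_ratio_le C m M : 0 < C -> (m <= M)%nat -> (0 < M)%nat ->
  (forall k, (m <= k)%nat -> tail F k <= C * INR k / F k) ->
  tail F M / tail F m <= C * INR M / (C * INR M + (INR M - INR m)).
Proof.
  intros HC HmM HM Hbound.
  assert (HM0 : 0 < INR M) by (apply lt_0_INR; lia).
  assert (HmM' : INR m <= INR M) by (apply le_INR; lia).
  assert (Hdrop := tail_drop_ge (tail F M / (C * INR M)) m (M - m)).
  replace (m + (M - m))%nat with M in Hdrop by lia.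
  rewrite minus_INR in Hdrop by lia.
  assert (Tm := tail_pos m). assert (TM := tail_pos M).
  enough (E : (INR M - INR m) * tail F M <= C * INR M * (tail F m - tail F M)).
  { apply (Rmult_le_reg_r (tail F m)); [lra|].
    unfold Rdiv at 1. rewrite Rmult_assoc, Rinv_l, Rmult_1_r by lra.
    apply (Rmult_le_reg_l (C * INR M + (INR M - INR m))); [nra|].
    replace ((C * INR M + (INR M - INR m)) * (C * INR M / (C * INR M + (INR M - INR m)) * tail F m))
      with (C * INR M * tail F m) by (field; nra). nra. }
  replace ((INR M - INR m) * tail F M)
    with (C * INR M * ((INR M - INR m) * (tail F M / (C * INR M)))) by (field; nra).
  apply Rmult_le_compat_l; [nra|]. apply Hdrop. intros k Hk.
  (* [tail F M <= tail F k <= C k / F k <= C M / F k] *)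
  assert (Hk' := Hbound k ltac:(lia)).
  assert (Hkm : INR k <= INR M) by (apply le_INR; lia).
  assert (Hfk := Finv_pos k). assert (Htk := tail_le k M ltac:(lia)).
  apply (Rmult_le_reg_l (C * INR M)); [nra|].
  replace (C * INR M * (tail F M / (C * INR M))) with (tail F M) by (field; nra).
  assert (C * INR k * / F k <= C * INR M * / F k).
  { apply Rmult_le_compat_r; [lra|]. apply Rmult_le_compat_l; lra. }
  unfold Rdiv in Hk'. lra.
Qed.

End Tail.

Definition growth_to_infty (F : nat -> R) : Prop :=
  is_lim_seq (fun k => / INR k * F k * tail F k) p_infty.

Lemma eventually_tail_ge F A : feedback F -> growth_to_infty F ->
  eventually (fun k => A * INR k / F k <= tail F k).
Proof.
  intros HF Hgrowth. apply is_lim_seq_spec in Hgrowth.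
  apply (filter_imp (fun k => A < / INR k * F k * tail F k /\ 0 < INR k)).
  - intros k [Hk Hk0]. assert (HFk : 0 < F k) by apply HF.
    apply (Rmult_lt_compat_l (INR k / F k)) in Hk; [|now apply Rdiv_lt_0_compat].
    replace (INR k / F k * (/ INR k * F k * tail F k)) with (tail F k) in Hk by (field; lra).
    unfold Rdiv in *. lra.
  - apply filter_and; [apply Hgrowth|].
    apply (filter_imp (fun k => 0 < 1 * INR k)); [intros k; lra|].
    apply eventually_lt_linear; lra.
Qed.

Lemma tail_ratio_lim F (m M : nat -> nat) a b : feedback F -> growth_to_infty F -> 0 < a ->
  eventually (fun N => a * INR N <= INR (m N) /\ (m N <= M N)%nat /\ INR (M N) <= b * INR N) ->
  is_lim_seq (fun N => tail F (M N) / tail F (m N)) 1.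
Proof.
  intros HF Hgrowth Ha HmM. apply is_lim_seq_spec. intros eps.
  set (A := (Rabs b + 1) / (a * eps)).
  assert (HA : 0 < A).
  { apply Rdiv_lt_0_compat; [generalize (Rabs_pos b); lra|].
    apply Rmult_lt_0_compat; [lra|apply cond_pos]. }
  destruct (eventually_tail_ge F A HF Hgrowth) as [k0 Hk0].
  apply (filter_imp (fun N => (a * INR N <= INR (m N) /\ (m N <= M N)%nat /\ INR (M N) <= b * INR N)
                              /\ INR k0 + 1 < a * INR N)).
  2: { apply filter_and; [exact HmM | now apply eventually_lt_linear]. }
  intros N [[Hm [HmM' HM]] HN].
  assert (Hm1 : (1 <= m N)%nat) by (apply INR_le; rewrite INR_1; generalize (pos_INR k0); lra).
  assert (Hmk : (k0 <= m N)%nat) by (apply INR_le; lra).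
  assert (Hlow := tail_ratio_ge F HF A (m N) (M N) HA ltac:(lia) (fun k Hk => Hk0 k ltac:(lia))).
  assert (Hup : tail F (M N) / tail F (m N) <= 1).
  { assert (Tm := tail_pos F HF (m N)). apply Rle_div_l; [lra|].
    rewrite Rmult_1_l. now apply tail_le. }
  (* [INR (M N) - INR (m N) < b N <= eps * A * a N <= eps * A * INR (m N)] *)
  assert (Hsmall : (INR (M N) - INR (m N)) / (A * INR (m N)) < eps).
  { assert (0 < INR N) by (generalize (pos_INR k0); nra).
    assert (0 < INR (m N)) by (apply lt_0_INR; lia).
    apply Rlt_div_l; [nra|].
    assert (Heps := cond_pos eps).
    assert (H1 : eps * A * (a * INR N) <= eps * A * INR (m N))
      by (apply Rmult_le_compat_l; [nra|lra]).
    replace (eps * A * (a * INR N)) with ((Rabs b + 1) * INR N) in H1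
      by (unfold A; field; lra).
    assert (b * INR N < (Rabs b + 1) * INR N) by (generalize (Rle_abs b); nra).
    lra. }
  rewrite Rabs_left1 by lra. lra.
Qed.

Lemma tailR_ratio_lim F (x y : nat -> R) alpha beta : feedback F -> growth_to_infty F -> 0 < alpha ->
  eventually (fun N => alpha * INR N <= x N <= beta * INR N /\ alpha * INR N <= y N <= beta * INR N) ->
  is_lim_seq (fun N => tailR F (y N) / tailR F (x N)) 1.
Proof.
  intros HF Hgrowth Ha Hxy. unfold tailR.
  set (lo N := Nat.min (round_nat (x N)) (round_nat (y N))).
  assert (Hbounds : eventually (fun N =>
    alpha / 2 * INR N <= INR (lo N) /\
    (lo N <= round_nat (x N))%nat /\ INR (round_nat (x N)) <= (beta + alpha) * INR N /\
    (lo N <= round_nat (y N))%nat /\ INR (round_nat (y N)) <= (beta + alpha) * INR N)).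
  { apply (filter_imp (fun N => (alpha * INR N <= x N <= beta * INR N /\ alpha * INR N <= y N <= beta * INR N)
                                /\ 1 < alpha * INR N)).
    2: { apply filter_and; [exact Hxy | now apply eventually_lt_linear]. }
    intros N [[Hx Hy] HN].
    destruct (round_nat_between (alpha * INR N) (beta * INR N) (x N)) as [Rx1 Rx2]; [lra|lra|].
    destruct (round_nat_between (alpha * INR N) (beta * INR N) (y N)) as [Ry1 Ry2]; [lra|lra|].
    unfold lo. repeat split; try lia; try lra.
    destruct (Nat.le_ge_cases (round_nat (x N)) (round_nat (y N))) as [Hle|Hge];
      [rewrite Nat.min_l|rewrite Nat.min_r]; auto; lra. }
  assert (Hx := tail_ratio_lim F lo (fun N => round_nat (x N)) (alpha / 2) (beta + alpha) HF Hgrowth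
                  ltac:(lra) ltac:(revert Hbounds; apply filter_imp; tauto)).
  assert (Hy := tail_ratio_lim F lo (fun N => round_nat (y N)) (alpha / 2) (beta + alpha) HF Hgrowth
                  ltac:(lra) ltac:(revert Hbounds; apply filter_imp; tauto)).
  assert (Hdiv := is_lim_seq_div' _ _ _ _ Hy Hx ltac:(lra)).
  rewrite Rdiv_1_l, Rinv_1 in Hdiv. revert Hdiv. apply is_lim_seq_ext. intros N.
  generalize (tail_pos F HF (lo N)) (tail_pos F HF (round_nat (x N))) (tail_pos F HF (round_nat (y N))).
  intros. field. lra.
Qed.

Lemma ratio_cond_along Fi Fj ci cj a c (psi : nat -> nat) :
  feedback Fi -> feedback Fj -> growth_to_infty Fi -> 0 < ci -> 0 < a -> 0 < c ->
  ratio_cond Fi Fj ci cj ->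
  eventually (fun N => c / 2 * INR N <= INR (psi N) <= 2 * c * INR N) ->
  is_lim_seq (fun N => tailR Fj (cj * INR (psi N)) / tailR Fi (a * INR N)) 1.
Proof.
  intros HFi HFj Hgrowth Hci Ha Hc HR Hpsi.
  assert (Hsub : is_lim_seq (fun N => tailR Fi (ci * INR (psi N)) / tailR Fj (cj * INR (psi N))) 1).
  { apply (is_lim_seq_subseq (fun N => tailR Fi (ci * INR N) / tailR Fj (cj * INR N))); [|exact HR].
    apply (filterlim_linear_lower psi (c / 2)); [lra|].
    revert Hpsi. apply filter_imp. tauto. }
  assert (Hslow : is_lim_seq (fun N => tailR Fi (ci * INR (psi N)) / tailR Fi (a * INR N)) 1).
  { apply (tailR_ratio_lim Fi _ _ (Rmin a (ci * c / 2)) (a + 2 * ci * c) HFi Hgrowth).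
    { apply Rmin_pos; nra. }
    revert Hpsi. apply filter_imp. intros N [H1 H2].
    assert (0 <= INR N) by apply pos_INR.
    assert (Rmin a (ci * c / 2) * INR N <= a * INR N) by (apply Rmult_le_compat_r, Rmin_l; lra).
    assert (Rmin a (ci * c / 2) * INR N <= ci * c / 2 * INR N) by (apply Rmult_le_compat_r, Rmin_r; lra).
    assert (ci * (c / 2 * INR N) <= ci * INR (psi N)) by (apply Rmult_le_compat_l; lra).
    assert (ci * INR (psi N) <= ci * (2 * c * INR N)) by (apply Rmult_le_compat_l; lra).
    repeat split; nra. }
  assert (Hdiv := is_lim_seq_div' _ _ _ _ Hslow Hsub ltac:(lra)).
  rewrite Rdiv_1_l, Rinv_1 in Hdiv. revert Hdiv. apply is_lim_seq_ext. intros N. unfold tailR.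
  generalize (tail_pos Fi HFi (round_nat (ci * INR (psi N)))) (tail_pos Fi HFi (round_nat (a * INR N)))
    (tail_pos Fj HFj (round_nat (cj * INR (psi N)))).
  intros. field. lra.
Qed.

Lemma ratio_cond_transfer Fi Fj ci cj a b :
  feedback Fi -> feedback Fj -> growth_to_infty Fi -> 0 < ci -> 0 < cj -> 0 < a -> 0 < b ->
  ratio_cond Fi Fj ci cj -> ratio_cond Fi Fj a b.
Proof.
  intros HFi HFj Hgrowth Hci Hcj Ha Hb HR.
  set (c := b / cj). assert (Hc : 0 < c) by (apply Rdiv_lt_0_compat; lra).
  (* [cj * psi (-1) N <= b N <= cj * psi 1 N], and both [psi s] grow linearly *)
  set (psi s N := round_nat (c * INR N + s)).
  assert (Hpsi : forall s, -1 <= s <= 1 -> eventually (fun N =>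
    c * INR N + s - / 2 < INR (psi s N) <= c * INR N + s + / 2 /\
    c / 2 * INR N <= INR (psi s N) <= 2 * c * INR N)).
  { intros s Hs. apply (filter_imp (fun N => 3 < c * INR N)); [|now apply eventually_lt_linear].
    intros N HN. destruct (round_nat_bounds (c * INR N + s)) as [H1 H2]; [lra|]. fold (psi s N) in H1, H2.
    repeat split; lra. }
  assert (Hup := ratio_cond_along Fi Fj ci cj a c (psi (-1)) HFi HFj Hgrowth Hci Ha Hc HR
                   ltac:(generalize (Hpsi (-1) ltac:(lra)); apply filter_imp; tauto)).
  assert (Hlow := ratio_cond_along Fi Fj ci cj a c (psi 1) HFi HFj Hgrowth Hci Ha Hc HR
                   ltac:(generalize (Hpsi 1 ltac:(lra)); apply filter_imp; tauto)).
  assert (Hj : is_lim_seq (fun N => tailR Fj (b * INR N) / tailR Fi (a * INR N)) 1).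
  { refine (is_lim_seq_le_le_loc _ _ _ _ _ Hlow Hup).
    apply (filter_imp (fun N => (c * INR N + 1 - / 2 < INR (psi 1 N))
                              /\ INR (psi (-1) N) <= c * INR N - 1 + / 2)).
    2: { apply filter_and; [generalize (Hpsi 1 ltac:(lra))|generalize (Hpsi (-1) ltac:(lra))];
         apply filter_imp; intros N; lra. }
    intros N [H1 H2]. unfold tailR.
    assert (Hb' : b = cj * c) by (unfold c; field; lra).
    assert (Ta := tail_pos Fi HFi (round_nat (a * INR N))).
    split; apply Rmult_le_compat_r; try (left; now apply Rinv_0_lt_compat);
      apply (tail_le Fj HFj), round_nat_le; rewrite Hb', Rmult_assoc;
      apply Rmult_le_compat_l; lra. }
  assert (Hinv := is_lim_seq_inv _ _ Hj ltac:(simpl; intros E; injection E; lra)).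
  simpl in Hinv. rewrite Rinv_1 in Hinv. unfold ratio_cond. revert Hinv. apply is_lim_seq_ext.
  intros N. unfold tailR.
  generalize (tail_pos Fi HFi (round_nat (a * INR N))) (tail_pos Fj HFj (round_nat (b * INR N))).
  intros. field. lra.
Qed.

Lemma tail_le_of_bounded_growth F C : feedback F ->
  (forall k, (1 <= k)%nat -> / INR k * F k * tail F k <= C) ->
  0 < C /\ forall k, (1 <= k)%nat -> tail F k <= C * INR k / F k.
Proof.
  intros HF HC. split.
  - apply (Rlt_le_trans _ (/ INR 1 * F 1%nat * tail F 1)); [|now apply HC].
    rewrite INR_1, Rinv_1, Rmult_1_l. apply Rmult_lt_0_compat; [apply HF|now apply tail_pos].
  - intros k Hk. specialize (HC k Hk).
    assert (0 < INR k) by (apply lt_0_INR; lia). assert (0 < F k) by apply HF.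
    apply (Rmult_le_compat_l (INR k / F k)) in HC; [|left; now apply Rdiv_lt_0_compat].
    replace (INR k / F k * (/ INR k * F k * tail F k)) with (tail F k) in HC by (field; lra).
    unfold Rdiv in *. lra.
Qed.

Lemma tailR_shift_ratio_le F C x e : feedback F -> 0 < C -> 0 < x -> 0 < e ->
  (forall k, (1 <= k)%nat -> tail F k <= C * INR k / F k) ->
  eventually (fun N => tailR F ((x + e) * INR N) / tailR F (x * INR N) <= C / (C + e / (4 * (x + e)))).
Proof.
  intros HF HC Hx He Hbound.
  apply (filter_imp (fun N => 2 < e * INR N /\ 1 < x * INR N)).
  2: { apply filter_and; now apply eventually_lt_linear. }
  intros N [HeN HxN]. unfold tailR.
  set (m := round_nat (x * INR N)). set (M := round_nat ((x + e) * INR N)).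
  destruct (round_nat_bounds (x * INR N)) as [Hm1 Hm2]; [lra|]. fold m in Hm1, Hm2.
  destruct (round_nat_bounds ((x + e) * INR N)) as [HM1 HM2]; [nra|]. fold M in HM1, HM2.
  assert (Hm : (0 < m)%nat) by (apply INR_lt; simpl; lra).
  assert (HmM : (m <= M)%nat) by (apply round_nat_le; nra).
  assert (HM0 : 0 < INR M) by (apply lt_0_INR; lia).
  apply (Rle_trans _ _ _ (tail_ratio_le F HF C m M HC HmM ltac:(lia) (fun k Hk => Hbound k ltac:(lia)))).
  (* the gap [M - m] is at least [e N / 2], while [M <= 2 (x + e) N] *)
  set (d := e / (4 * (x + e))).
  assert (Hgap : d * INR M <= INR M - INR m).
  { assert (d * INR M <= d * (2 * (x + e) * INR N))
      by (apply Rmult_le_compat_l; [unfold d; apply Rlt_le, Rdiv_lt_0_compat|]; nra).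
    replace (d * (2 * (x + e) * INR N)) with (e * INR N / 2) in * by (unfold d; field; lra).
    lra. }
  assert (Hd : 0 < d) by (unfold d; apply Rdiv_lt_0_compat; lra).
  assert (HD : 0 < C * INR M + (INR M - INR m)) by nra.
  assert (E : C / (C + d) - C * INR M / (C * INR M + (INR M - INR m))
              = C * (INR M - INR m - d * INR M) / ((C + d) * (C * INR M + (INR M - INR m))))
    by (field; split; lra).
  enough (0 <= C * (INR M - INR m - d * INR M) / ((C + d) * (C * INR M + (INR M - INR m)))) by lra.
  apply Rdiv_le_0_compat; nra.
Qed.

Lemma limsup_shifted_ratio_lt_1 Fi Fj ci cj C eps :
  feedback Fi -> feedback Fj -> 0 < C -> 0 < ci -> 0 < eps ->
  (forall k, (1 <= k)%nat -> tail Fi k <= C * INR k / Fi k) -> ratio_cond Fi Fj ci cj ->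
  Rbar_lt (LimSup_seq (fun N => tailR Fi ((ci + eps) * INR N) / tailR Fj (cj * INR N))) 1.
Proof.
  intros HFi HFj HC Hci Heps Hbound HR.
  set (q := C / (C + eps / (4 * (ci + eps)))).
  assert (Hq : q < 1).
  { unfold q. apply Rlt_div_l; [|rewrite Rmult_1_l];
    assert (0 < eps / (4 * (ci + eps))) by (apply Rdiv_lt_0_compat; lra); lra. }
  set (ratio_seq N := tailR Fi (ci * INR N) / tailR Fj (cj * INR N)).
  assert (Hlim := is_lim_seq_scal_l ratio_seq q 1 HR). simpl in Hlim. rewrite Rmult_1_r in Hlim.
  apply (Rbar_le_lt_trans _ (LimSup_seq (fun N => q * ratio_seq N))).
  2: { now rewrite (is_LimSup_seq_unique _ _ (is_lim_LimSup_seq _ _ Hlim)). }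
  apply LimSup_le. generalize (tailR_shift_ratio_le Fi C ci eps HFi HC Hci Heps Hbound).
  apply filter_imp.
  intros N HN. fold q in HN. unfold ratio_seq, tailR in *.
  generalize (tail_pos Fi HFi (round_nat (ci * INR N))) (tail_pos Fj HFj (round_nat (cj * INR N))).
  intros Ti Tj.
  replace (tail Fi (round_nat ((ci + eps) * INR N)) / tail Fj (round_nat (cj * INR N)))
    with (tail Fi (round_nat ((ci + eps) * INR N)) / tail Fi (round_nat (ci * INR N))
          * (tail Fi (round_nat (ci * INR N)) / tail Fj (round_nat (cj * INR N)))) by (field; lra).
  apply Rmult_le_compat_r; [|exact HN]. apply Rlt_le, Rdiv_lt_0_compat; lra.
Qed.

Theorem mainTheorem7 (Fi Fj : nat -> R) (chi_i chi_j : R) :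
  feedback Fi -> feedback Fj ->
  0 < chi_i -> 0 < chi_j -> chi_i + chi_j <= 1 ->
  ratio_cond Fi Fj chi_i chi_j ->
  ((exists C : R, forall k : nat, (1 <= k)%nat ->
       / INR k * Fi k * tail Fi k <= C) ->
     forall eps : R, 0 < eps ->
       Rbar_lt
         (LimSup_seq (fun N => tailR Fi ((chi_i + eps) * INR N)
                               / tailR Fj (chi_j * INR N)))
         (Finite 1))
  /\
  (is_lim_seq (fun k => / INR k * Fi k * tail Fi k) p_infty ->
     forall a b : R, 0 < a -> 0 < b -> a + b <= 1 ->
       ratio_cond Fi Fj a b).
Proof.
  intros HFi HFj Hci Hcj _ HR. split.
  - intros [C HC] eps Heps.
    destruct (tail_le_of_bounded_growth Fi C HFi HC) as [HC0 Hbound].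
    exact (limsup_shifted_ratio_lt_1 Fi Fj chi_i chi_j C eps HFi HFj HC0 Hci Heps Hbound HR).
  - intros Hgrowth a b Ha Hb _.
    exact (ratio_cond_transfer Fi Fj chi_i chi_j a b HFi HFj Hgrowth Hci Hcj Ha Hb HR).
Qed.
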